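(* Let $Y$ be a sofic shift. For any labeled graph $(G,L_G)$ presenting $Y$ which is right-resolving, regular and follower-separated, the number $\# V_G$ of vertices is at most the number of distinct sets $F(y)$, $y\in Y$. Moreover, the future cover $(\mathbb K(Y),L_{\mathbb K(Y)})$ is, up to isomorphism of labeled graphs, the only presentation of $Y$ which is right-resolving, regular and follower-separated and whose number of vertices equals the number of distinct sets $F(y)$, $y\in Y$.
   Context: A labeled graph $(G,L_G)$: finite directed graph $G$ (vertices $V_G$, edges $E_G$, source/terminal maps $s_G,t_G$), without sinks or sources, with labeling $L_G:E_G\to A$, $A$ a finite alphabet; $X_G$ is its edge shift; $L_G$ acts coordinatewise on paths; it presents $Y=L_G(X_G)$. $X_G[0,\infty)$ denotes right-infinite paths, $X_G(-\infty,-1]$ left-infinite paths; $s_G$ of a right-infinite path is the source of its first edge, $t_G$ of a left-infinite path is the terminal vertex of its last edge; $Y[0,\infty)=\{y_{[0,\infty)}:y\in Y\}$. Right-resolving: distinct edges with the same source have distinct labels. Follower set of a vertex: $f_G(v)=\{L_G(x):x\in X_G[0,\infty), s_G(x)=v\}$. For $y\in Y$: $F(y)=\{w\in Y[0,\infty): y_{(-\infty,-1]}w\in Y\}$ (the follower sets of $Y$). A vertex $v$ is regular if there is $z\in X_G$ with $t_G(z_{(-\infty,-1]})=v$ and $f_G(v)=F(L_G(z))$; the labeled graph is regular if all vertices are regular. Follower-separated: $f_G(v)=f_G(w)$ implies $v=w$. Future cover $(\mathbb K(Y),L_{\mathbb K(Y)})$: vertices are the distinct sets $F(y)$, $y\in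 Y$; there is an edge labeled $a\in A$ from $F(y)$ to $F(z)$ exactly when $F(z)=\{w\in A^{\mathbb N}: aw\in F(y)\}$ (one edge per such pair and label). Isomorphism of labeled graphs: a graph isomorphism preserving labels. *)

From mathcomp Require Import all_boot all_order all_algebra.
Set Implicit Arguments. Unset Strict Implicit. Unset Printing Implicit Defensive.
Import GRing.Theory.
Local Open Scope ring_scope.

Record lgraph (A : finType) := LGraph {
  lV : finType;
  lE : finType;
  src : lE -> lV;
  tgt : lE -> lV;
  lab : lE -> A
}.

Section Defs.
Variable A : finType.

Definition essential (G : lgraph A) : Prop :=
  forall v : lV G, (exists e : lE G, src e = v) /\ (exists e : lE G, tgt e = v).

Definition edge_shift (G : lgraph A) (x : int -> lE G) : Prop :=
  forall i : int, tgt (x i) = src (x (i + 1)).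

Definition right_path (G : lgraph A) (x : nat -> lE G) : Prop :=
  forall n : nat, tgt (x n) = src (x n.+1).

Definition label_image (G : lgraph A) (y : int -> A) : Prop :=
  exists x : int -> lE G, edge_shift x /\ y = (fun i => lab (x i)).

Definition presents (G : lgraph A) (Y : (int -> A) -> Prop) : Prop :=
  essential G /\ forall y, Y y <-> label_image G y.

Definition sofic (Y : (int -> A) -> Prop) : Prop :=
  exists G : lgraph A, presents G Y.

Definition right_resolving (G : lgraph A) : Prop :=
  forall e1 e2 : lE G, src e1 = src e2 -> lab e1 = lab e2 -> e1 = e2.

Definition vfollower (G : lgraph A) (v : lV G) (w : nat -> A) : Prop :=
  exists x : nat -> lE G, right_path x /\ src (x 0%N) = v /\ w = (fun n => lab (x n)).

Definition right_rays (Y : (int -> A) -> Prop) (w : nat -> A) : Prop :=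
  exists y, Y y /\ w = (fun n : nat => y (n%:Z)).

Definition concat (y : int -> A) (w : nat -> A) : int -> A :=
  fun i => match i with Posz n => w n | Negz _ => y i end.

Definition Ffollower (Y : (int -> A) -> Prop) (y : int -> A) (w : nat -> A) : Prop :=
  right_rays Y w /\ Y (concat y w).

Definition regular_vertex (G : lgraph A) (Y : (int -> A) -> Prop) (v : lV G) : Prop :=
  exists z : int -> lE G, edge_shift z /\ tgt (z (-1)) = v /\
            vfollower v = Ffollower Y (fun i => lab (z i)).

Definition regular (G : lgraph A) (Y : (int -> A) -> Prop) : Prop :=
  forall v : lV G, regular_vertex Y v.

Definition follower_separated (G : lgraph A) : Prop :=
  forall v w : lV G, vfollower v = vfollower w -> v = w.

Definition follower_sets (Y : (int -> A) -> Prop) (X : (nat -> A) -> Prop) : Prop :=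
  exists y, Y y /\ X = Ffollower Y y.

Definition has_card (T : Type) (S : T -> Prop) (N : nat) : Prop :=
  exists f : 'I_N -> T, injective f /\ forall X, S X <-> exists i, f i = X.

Definition prepend (a : A) (w : nat -> A) : nat -> A :=
  fun n => if n is k.+1 then w k else a.

Definition derive (a : A) (X : (nat -> A) -> Prop) : (nat -> A) -> Prop :=
  fun w => X (prepend a w).

(* K, via phi : V_K -> sets, is (a copy of) the future cover K(Y):
   phi is a bijection of V_K onto the distinct F(y), and there is exactly
   one edge labeled a from u to v iff phi v = {w | a w in phi u}, none otherwise. *)
Definition is_future_cover (Y : (int -> A) -> Prop) (K : lgraph A)
    (phi : lV K -> (nat -> A) -> Prop) : Prop :=
  injective phi /\
  (forall X, follower_sets Y X <-> exists v, phi v = X) /\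
  (forall (u v : lV K) (a : A),
     (phi v = derive a (phi u) ->
        exists! e : lE K, src e = u /\ tgt e = v /\ lab e = a) /\
     (phi v <> derive a (phi u) ->
        forall e : lE K, ~ (src e = u /\ tgt e = v /\ lab e = a))).

Definition lgraph_iso (G H : lgraph A) : Prop :=
  exists (fV : lV G -> lV H) (fE : lE G -> lE H),
    bijective fV /\ bijective fE /\
    forall e : lE G, src (fE e) = fV (src e) /\ tgt (fE e) = fV (tgt e) /\
              lab (fE e) = lab e.

End Defs.

Arguments is_future_cover {A} Y K phi.
Arguments regular {A} G Y.

(* A follower set F(y) depends only on the set of vertices of a fixed presentation G0 at
   which a left-infinite path labeled y_(-oo,-1] can end: it is the union of the follower
   sets in G0 of these vertices, so there are finitely many follower sets.  In a
   right-resolving, regular, follower-separated presentation G, the map v |-> f_G(v)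
   injects the vertices into the follower sets and satisfies f_G(t e) = {w | L e w in
   f_G(s e)}; when it is onto, it is therefore a future-cover labeling of G.  Conversely,
   along a path of a future cover the vertex labels are the successive derivatives of a
   follower set, so every central block of the label of a bi-infinite path occurs in Y,
   which is closed by König's lemma since Y is the label image of a finite graph.  Two
   future covers are isomorphic through their vertex labelings, edges being matched by
   right-resolvingness. *)

From mathcomp Require Import all_boot all_order all_algebra.
From mathcomp Require Import boolp zify.
Set Implicit Arguments. Unset Strict Implicit. Unset Printing Implicit Defensive.
Import GRing.Theory.
Local Open Scope ring_scope.

Lemma finite_decreasing_meet (T : finType) (Q : nat -> T -> Prop) :
  (forall n m t, (n <= m)%N -> Q m t -> Q n t) ->
  (forall n, exists t, Q n t) -> exists t, forall n, Q n t.
Proof.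
move=> Qdec Qne; apply: contrapT; rewrite -forallNE => noQ.
have /choice[bad badP] : forall t, exists n, ~ Q n t.
  by move=> t; apply/existsNP; apply: noQ.
have [t Qt] := Qne (\max_t bad t)%N.
by apply: (badP t); apply: Qdec Qt; apply: leq_bigmax.
Qed.

Section HasCard.
Variables (U : Type) (S : U -> Prop).

Lemma image_has_card (T : finType) (g : T -> U) :
  (forall u, S u -> exists t, g t = u) -> exists N, has_card S N.
Proof.
move=> Sg.
pose rep t := odflt t [pick s | `[< g s = g t >]].
have rep_g t : g (rep t) = g t by rewrite /rep; case: pickP => [s /asboolP|].
have rep_eq t t' : g t = g t' -> rep t = rep t'.
  move=> eqg; rewrite /rep (eq_pick (_ : _ =1 fun s => `[< g s = g t' >])).
    by case: pickP => //= /(_ t'); rewrite asboolT.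
  by move=> s; rewrite eqg.
pose C := [set rep t | t in [set t | `[< S (g t) >]]].
exists #|C|, (fun i => g (enum_val i)); split.
  move=> i j; have /imsetP[t _ ti] := enum_valP i; have /imsetP[t' _ tj] := enum_valP j.
  by rewrite ti tj !rep_g => /rep_eq eqr; apply: enum_val_inj; rewrite ti tj eqr.
move=> u; split=> [Su | [i <-]].
  have [t gt] := Sg u Su.
  have Ct : rep t \in C by apply: imset_f; rewrite inE; apply/asboolP; rewrite gt.
  by exists (enum_rank_in Ct (rep t)); rewrite enum_rankK_in // rep_g.
by have /imsetP[t + ->] := enum_valP i; rewrite inE rep_g => /asboolP.
Qed.

Variables (N : nat) (HS : has_card S N).

Lemma has_card_le (T : finType) (h : T -> U) :
  injective h -> (forall t, S (h t)) -> (#|T| <= N)%N.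
Proof.
move=> hinj hS; case: HS => f [finj fS].
have /choice[g fg] : forall t, exists i, f i = h t by move=> t; apply/fS.
rewrite -[N]card_ord; apply: (@leq_card _ _ g) => t t' eqg.
by apply: hinj; rewrite -!fg eqg.
Qed.

Lemma has_card_ge (T : finType) (h : T -> U) :
  (forall u, S u -> exists t, h t = u) -> (N <= #|T|)%N.
Proof.
move=> hS; case: HS => f [finj fS].
have /choice[g hg] : forall i, exists t, h t = f i.
  by move=> i; apply/hS/fS; exists i.
rewrite -[N]card_ord; apply: (@leq_card _ _ g) => i j eqg.
by apply: finj; rewrite -!hg eqg.
Qed.

Lemma has_card_onto (T : finType) (h : T -> U) :
  injective h -> (forall t, S (h t)) -> #|T| = N -> forall u, S u -> exists t, h t = u.
Proof.
move=> hinj hS cardT u Su; apply: contrapT; rewrite -forallNE => hu.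
(* Otherwise [h] extends injectively to [option T], which has too many elements. *)
suff : (#|{: option T}| <= N)%N by rewrite card_option cardT ltnn.
apply: (@has_card_le _ (fun o => if o is Some t then h t else u)); last by case.
move=> [t|] [t'|] //= eqh; first by rewrite (hinj _ _ eqh).
  by case: (hu t).
by case: (hu t'); rewrite eqh.
Qed.

End HasCard.

Lemma addPosz1 (n : nat) : n%:Z + 1 = n.+1%:Z.
Proof. by rewrite -PoszD addn1. Qed.

Lemma addNegz01 : Negz 0 + 1 = 0.
Proof. by rewrite NegzE addNr. Qed.

Lemma addNegzS1 (n : nat) : Negz n.+1 + 1 = Negz n.
Proof. by rewrite !NegzE; lia. Qed.

Lemma dependent_choice_nat (T : Type) (P : nat -> T -> Prop) (R : T -> T -> Prop) (t0 : T) :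
  P 0%N t0 -> (forall n t, P n t -> exists t', R t t' /\ P n.+1 t') ->
  exists x : nat -> T, x 0%N = t0 /\ forall n, P n (x n) /\ R (x n) (x n.+1).
Proof.
move=> P0 step.
have /choice[next nextP] : forall nt : nat * T, exists t',
    P nt.1 nt.2 -> R nt.2 t' /\ P nt.1.+1 t'.
  move=> [n t]; have [/step[t' ?]|nP] := pselect (P n t); first by exists t'.
  by exists t => /nP.
pose x := fix x n := if n is k.+1 then next (k, x k) else t0.
have Px n : P n (x n) by elim: n => [|n IH] //; exact: (nextP (n, x n) IH).2.
by exists x; split=> // n; split=> //; exact: (nextP (n, x n) (Px n)).1.
Qed.

Lemma dependent_choice_int (T : Type) (P : int -> T -> Prop) (R : T -> T -> Prop) :
  (exists t, P 0 t) ->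
  (forall i t, P i t -> exists t', R t t' /\ P (i + 1) t') ->
  (forall i t, P i t -> exists t', R t' t /\ P (i - 1) t') ->
  exists x : int -> T, forall i, P i (x i) /\ R (x i) (x (i + 1)).
Proof.
move=> [t0 P0] fwd bwd.
have [f [f0 fP]] : exists f : nat -> T, f 0%N = t0 /\
    forall n, P n%:Z (f n) /\ R (f n) (f n.+1).
  apply: (@dependent_choice_nat _ (fun n => P n%:Z)) => // n t /fwd[t' ?].
  by exists t'; rewrite -addPosz1.
have [b [b0 bP]] : exists b : nat -> T, b 0%N = t0 /\
    forall n, P (- n%:Z) (b n) /\ R (b n.+1) (b n).
  apply: (@dependent_choice_nat _ (fun n => P (- n%:Z)) (fun t t' => R t' t)) => //.
  move=> n t /bwd[t' ?].
  by exists t'; rewrite -addPosz1 opprD.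
exists (fun i => match i with Posz n => f n | Negz n => b n.+1 end).
case=> [n|[|n]]; rewrite ?addPosz1 ?addNegz01 ?addNegzS1 ?NegzE.
- exact: fP.
- by rewrite /= f0 -b0; split; [apply: (bP 1%N).1 | apply: (bP 0%N).2].
- by split; [apply: (bP n.+2).1 | apply: (bP n.+1).2].
Qed.

Definition shift (T : Type) (k : int) (u : int -> T) : int -> T := fun j => u (j + k).

Lemma shift_shift (T : Type) (k l : int) (u : int -> T) : shift k (shift l u) = shift (k + l) u.
Proof. by apply: funext => j; rewrite /shift addrA. Qed.

Lemma shift0 (T : Type) (u : int -> T) : shift 0 u = u.
Proof. by apply: funext => j; rewrite /shift addr0. Qed.

Section Concat.
Variable A : finType.
Implicit Types (z : int -> A) (w : nat -> A).

Lemma concat_shift1 z w : concat (shift 1 z) w = shift 1 (concat z (prepend (z 0) w)).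
Proof. by apply: funext => -[n|[|n]] //=; rewrite /shift /concat addPosz1. Qed.

Lemma concat_concat z w w' : concat (concat z w) w' = concat z w'.
Proof. by apply: funext => -[n|n]. Qed.

Lemma concat_nonneg z : concat z (fun n => z n%:Z) = z.
Proof. by apply: funext => -[n|n]. Qed.

End Concat.

Definition splice (A : Type) (a : nat -> A) (m : nat) (w : nat -> A) : nat -> A :=
  fun k => if (k < m)%N then a k else w (k - m)%N.

Lemma splice0 (A : Type) (a w : nat -> A) : splice a 0 w = w.
Proof. by apply: funext => k; rewrite /splice subn0. Qed.

Lemma spliceS (A : finType) (a w : nat -> A) (m : nat) :
  splice a m.+1 w = prepend (a 0%N) (splice (fun k => a k.+1) m w).
Proof. by apply: funext => -[|k]. Qed.

Section Paths.
Variables (A : finType) (G : lgraph A).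
Implicit Types (x : int -> lE G) (p : nat -> lE G).

Lemma edge_shift_right x : edge_shift x -> right_path (fun n => x n%:Z).
Proof. by move=> Ex n; rewrite Ex addPosz1. Qed.

Lemma edge_shift_concat x p :
  edge_shift x -> right_path p -> tgt (x (-1)) = src (p 0%N) -> edge_shift (concat x p).
Proof. by move=> Ex Rp x_p; case=> [n|[|n]] //=; rewrite addn1 Rp. Qed.

Lemma lab_concat x p :
  (fun i => lab (concat x p i)) = concat (fun i => lab (x i)) (fun n => lab (p n)).
Proof. by apply: funext => -[n|n]. Qed.

End Paths.

Section LabelImageClosed.
Variables (A : finType) (G : lgraph A) (y : int -> A).
Hypothesis approx : forall n : nat, exists y', label_image G y' /\
  forall j : int, (`|j| <= n)%N -> y' j = y j.

Definition window_edge (n : nat) (i : int) (e : lE G) : Prop :=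
  exists x, edge_shift x /\ x i = e /\ forall j : int, (`|j| <= n)%N -> lab (x j) = y j.

Definition tracking_edge (i : int) (e : lE G) : Prop := forall n, window_edge n i e.

Lemma window_edge_decr n m i e : (n <= m)%N -> window_edge m i e -> window_edge n i e.
Proof.
move=> le_nm [x [Ex [xi Lx]]]; exists x; split=> //; split=> // j le_jn.
by apply: Lx; apply: leq_trans le_jn le_nm.
Qed.

Lemma tracking_edge_lab i e : tracking_edge i e -> lab e = y i.
Proof. by move=> /(_ `|i|%N) [x [_ [<- Lx]]]; apply: Lx. Qed.

Lemma tracking_edge0 : exists e, tracking_edge 0 e.
Proof.
apply: finite_decreasing_meet => [n m e|n]; first exact: window_edge_decr.
have [_ [[x [Ex ->]] Ly]] := approx n.
by exists (x 0), x.
Qed.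

Lemma tracking_edge_step (d : int) (R : lE G -> lE G -> Prop) :
  (forall x i, edge_shift x -> R (x i) (x (i + d))) ->
  forall i e, tracking_edge i e -> exists e', R e e' /\ tracking_edge (i + d) e'.
Proof.
move=> Rx i e Te.
have [e' Te'] : exists e', forall n, R e e' /\ window_edge n (i + d) e'.
  apply: finite_decreasing_meet => [n m e' le_nm [? ?]|n].
    by split=> //; apply: window_edge_decr le_nm _.
  have [x [Ex [xi Lx]]] := Te n.
  by exists (x (i + d)); split; [rewrite -xi; apply: Rx | exists x].
by exists e'; split=> [|n]; [apply: (Te' 0%N).1 | apply: (Te' n).2].
Qed.

Lemma label_image_closed : label_image G y.
Proof.
have edge_bwd (x : int -> lE G) i : edge_shift x -> tgt (x (i - 1)) = src (x i).
  by move=> Ex; rewrite Ex subrK.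
have [x Tx] := dependent_choice_int (R := fun e e' => tgt e = src e') tracking_edge0
  (tracking_edge_step (d := 1) (fun x i Ex => Ex i))
  (tracking_edge_step (d := -1) (R := fun e e' => tgt e' = src e) edge_bwd).
exists x; split=> [i|]; first exact: (Tx i).2.
by apply: funext => i; rewrite (tracking_edge_lab (Tx i).1).
Qed.

End LabelImageClosed.

Section ShiftSpace.
Variables (A : finType) (Y : (int -> A) -> Prop).
Implicit Types (z u : int -> A) (w : nat -> A).

Definition shift_invariant := forall k u, Y u -> Y (shift k u).

Definition shift_closed := forall u,
  (forall n : nat, exists u', Y u' /\ forall j : int, (`|j| <= n)%N -> u' j = u j) -> Y u.

Lemma presents_shift_invariant (G : lgraph A) : presents G Y -> shift_invariant.
Proof.
move=> [_ YG] k u /YG[x [Ex ->]]; apply/YG.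
by exists (shift k x); split=> // i; rewrite /shift Ex addrAC.
Qed.

Lemma presents_shift_closed (G : lgraph A) : presents G Y -> shift_closed.
Proof.
move=> [_ YG] u approx; apply/YG/label_image_closed => n.
by have [u' [/YG Gu' u'u]] := approx n; exists u'.
Qed.

Lemma FfollowerE z w : Ffollower Y z w <-> Y (concat z w).
Proof. by split=> [[]|Yzw] //; split=> //; exists (concat z w). Qed.

Lemma Ffollower_concat z w : Ffollower Y (concat z w) = Ffollower Y z.
Proof. by apply/predeqP => w'; rewrite !FfollowerE concat_concat. Qed.

Lemma Ffollower_nonempty z : Y z -> exists w, Ffollower Y z w.
Proof. by move=> Yz; exists (fun n => z n%:Z); apply/FfollowerE; rewrite concat_nonneg. Qed.

Hypothesis Yshift : shift_invariant.

Lemma Yshift_iff k u : Y (shift k u) <-> Y u.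
Proof.
split; last exact: Yshift.
by move=> /(Yshift (- k)); rewrite shift_shift addNr shift0.
Qed.

Lemma Ffollower_shift1 z : Ffollower Y (shift 1 z) = derive (z 0) (Ffollower Y z).
Proof. by apply/predeqP => w; rewrite /derive !FfollowerE concat_shift1 Yshift_iff. Qed.

Lemma Ffollower_shiftS z (i : int) :
  Ffollower Y (shift (i + 1) z) = derive (z i) (Ffollower Y (shift i z)).
Proof. by rewrite addrC -shift_shift Ffollower_shift1 /shift add0r. Qed.

End ShiftSpace.

Section SoficFollowerSets.
Variables (A : finType) (Y : (int -> A) -> Prop) (G : lgraph A).
Hypothesis GY : presents G Y.

Definition past_terminals (y : int -> A) : {set lV G} :=
  [set v | `[< exists x : int -> lE G, edge_shift x /\
      (forall n, lab (x (Negz n)) = y (Negz n)) /\ tgt (x (-1)) = v >]].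

Definition union_vfollower (V : {set lV G}) (w : nat -> A) : Prop :=
  exists2 v, v \in V & vfollower v w.

Lemma Ffollower_past_terminals y : Ffollower Y y = union_vfollower (past_terminals y).
Proof.
apply/predeqP => w; rewrite FfollowerE; case: GY => _ ->; split.
  move=> [x [Ex Lx]]; exists (tgt (x (-1))).
    rewrite inE; apply/asboolP; exists x; split=> //; split=> // n.
    by have /= <- := congr1 (fun u => u (Negz n)) Lx.
  exists (fun n => x n%:Z); split; first exact: edge_shift_right.
  split; first by rewrite Ex addNr.
  by apply: funext => n; have /= -> := congr1 (fun u => u n%:Z) Lx.
move=> [v]; rewrite inE => /asboolP[x [Ex [Lx xv]]] [p [Rp [p0 ->]]].
exists (concat x p); split; first by apply: edge_shift_concat; rewrite // xv p0.
by rewrite lab_concat; apply: funext => -[n|n] /=; rewrite ?Lx.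
Qed.

Lemma follower_sets_finite : exists N, has_card (follower_sets Y) N.
Proof.
apply: (@image_has_card _ _ _ union_vfollower) => _ [y [_ ->]].
by exists (past_terminals y); rewrite Ffollower_past_terminals.
Qed.

End SoficFollowerSets.

Section RegularPresentation.
Variables (A : finType) (Y : (int -> A) -> Prop) (G : lgraph A).
Hypotheses (GY : presents G Y) (Grr : right_resolving G) (Greg : regular G Y)
  (Gsep : follower_separated G).

Lemma vfollower_follower_set (v : lV G) : follower_sets Y (vfollower v).
Proof.
have [z [Ez [_ ->]]] := Greg v; exists (fun i => lab (z i)); split=> //.
by case: GY => _ ->; exists z.
Qed.

Lemma vfollower_nonempty (v : lV G) : exists w, vfollower v w.
Proof.
have /choice[out srcK] : forall u : lV G, exists e, src e = u.
  by move=> u; case: GY => /(_ u)[].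
pose p := fix p n := if n is k.+1 then out (tgt (p k)) else out v.
by exists (fun n => lab (p n)), p; split=> [n|]; rewrite /= srcK.
Qed.

Lemma vfollower_tgt (e : lE G) : vfollower (tgt e) = derive (lab e) (vfollower (src e)).
Proof.
apply/predeqP => w; split.
  move=> [p [Rp [p0 ->]]]; exists (fun n => if n is k.+1 then p k else e).
  by split; [case=> [|n] //=; rewrite p0 | split=> //; apply: funext => -[]].
move=> [p [Rp [p0 Lp]]].
have p0e : p 0%N = e by apply: Grr => //; have /= := congr1 (fun u => u 0%N) Lp.
exists (fun n => p n.+1); split=> [n|]; first exact: Rp.
split; first by rewrite -Rp p0e.
by apply: funext => n; have /= -> := congr1 (fun u => u n.+1) Lp.
Qed.

Variables (N : nat) (HN : has_card (follower_sets Y) N).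

Lemma regular_presentation_card_le : (#|lV G| <= N)%N.
Proof. exact: (has_card_le HN Gsep vfollower_follower_set). Qed.

Lemma regular_presentation_future_cover : #|lV G| = N -> is_future_cover Y G (@vfollower _ G).
Proof.
move=> cardG; split=> //; split.
  move=> X; split=> [|[v <-]]; last exact: vfollower_follower_set.
  exact: (has_card_onto HN (h := @vfollower _ G) Gsep vfollower_follower_set cardG).
move=> u v a; split=> [fv | fv e [eu [ev ea]]]; last by apply: fv; rewrite -eu -ev -ea vfollower_tgt.
have [w] := vfollower_nonempty v; rewrite fv => -[p [_ [p0 Lp]]].
have pa : lab (p 0%N) = a by have /= := congr1 (fun u => u 0%N) Lp.
exists (p 0%N); split=> [|e [eu [_ ea]]]; last by apply: Grr; rewrite ?eu ?ea.
by split=> //; split=> //; apply: Gsep; rewrite vfollower_tgt p0 pa fv.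
Qed.

End RegularPresentation.

Section FutureCover.
Variables (A : finType) (Y : (int -> A) -> Prop).
Hypotheses (Yshift : shift_invariant Y) (Yclosed : shift_closed Y).
Variables (K : lgraph A) (phi : lV K -> (nat -> A) -> Prop).
Hypothesis KY : is_future_cover Y K phi.
Implicit Types (y z : int -> A) (w : nat -> A).

Lemma fc_inj : injective phi.
Proof. by case: KY. Qed.

Lemma fc_edge e : phi (tgt e) = derive (lab e) (phi (src e)).
Proof.
case: KY => _ [_ /(_ (src e) (tgt e) (lab e))[_ no_edge]].
by apply: contrapT => /no_edge/(_ e); apply.
Qed.

Lemma fc_edge_unique u v a : phi v = derive a (phi u) ->
  exists! e, src e = u /\ tgt e = v /\ lab e = a.
Proof. by case: KY => _ [_ /(_ u v a)[]]. Qed.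

Lemma fc_right_resolving : right_resolving K.
Proof.
move=> e1 e2 e12s e12l.
have e12t : tgt e1 = tgt e2 by apply: fc_inj; rewrite !fc_edge e12s e12l.
have [e [_ uniq_e]] := fc_edge_unique (fc_edge e1).
by rewrite -(uniq_e e1) // -(uniq_e e2).
Qed.

Lemma fc_vertex v : exists z, Y z /\ phi v = Ffollower Y z.
Proof. by case: KY => _ [/(_ (phi v)) fsP _]; apply/fsP; exists v. Qed.

Lemma fc_vertex_of z : Y z -> exists v, phi v = Ffollower Y z.
Proof. by case: KY => _ [fsP _] Yz; apply/fsP; exists z. Qed.

Lemma fc_nonempty v : exists w, phi v w.
Proof. by have [z [Yz ->]] := fc_vertex v; apply: Ffollower_nonempty. Qed.

Lemma fc_path y : Y y -> exists x, edge_shift x /\ (fun i => lab (x i)) = y /\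
  forall i, phi (src (x i)) = Ffollower Y (shift i y).
Proof.
move=> Yy.
have /choice[vx vxE] : forall i, exists v, phi v = Ffollower Y (shift i y).
  by move=> i; apply/fc_vertex_of/Yshift.
have /choice[x xE] : forall i, exists e, src e = vx i /\ tgt e = vx (i + 1) /\ lab e = y i.
  move=> i; have /fc_edge_unique[e [? _]] : phi (vx (i + 1)) = derive (y i) (phi (vx i)).
    by rewrite !vxE Ffollower_shiftS.
  by exists e.
exists x; split=> [i|]; first by have [_ [-> _]] := xE i; have [-> _] := xE (i + 1).
split=> [|i]; last by have [-> _] := xE i.
by apply: funext => i; have [_ [_ ->]] := xE i.
Qed.

Lemma fc_splice p : right_path p ->
  forall m w, phi (src (p 0%N)) (splice (fun k => lab (p k)) m w) <-> phi (src (p m)) w.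
Proof.
move=> Rp m; elim: m p Rp => [|m IH] p Rp w; first by rewrite splice0.
rewrite spliceS -(IH (fun k => p k.+1)) => [|k]; last exact: Rp.
by rewrite -Rp fc_edge.
Qed.

Lemma fc_label_image y : label_image K y -> Y y.
Proof.
move=> [x [Ex ->]]; apply: Yclosed => n.
(* The block on [-n, n] is read along [p] from a vertex labeled by some F(z). *)
pose p k := x (- n%:Z + k%:Z).
have Rp : right_path p by move=> k; rewrite /p Ex -addrA addPosz1.
have [z [Yz phiz]] := fc_vertex (src (p 0%N)).
have [w phiw] := fc_nonempty (src (p (n + n).+1)).
move: phiw; rewrite -fc_splice // phiz FfollowerE => Yzw.
exists (shift n%:Z (concat z (splice (fun k => lab (p k)) (n + n).+1 w))).
split=> [|j le_jn]; first exact: Yshift.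
have [k [jk lt_k]] : exists k : nat, j + n%:Z = k%:Z /\ (k < (n + n).+1)%N.
  by exists (absz (j + n%:Z)); lia.
have jE : - n%:Z + k%:Z = j by lia.
by rewrite /shift jk /= /splice lt_k /p jE.
Qed.

Lemma fc_vertex_path v : exists x, edge_shift x /\ src (x 0) = v /\
  phi v = Ffollower Y (fun i => lab (x i)).
Proof.
have [z [Yz phiz]] := fc_vertex v; have [x [Ex [Lx phix]]] := fc_path Yz.
exists x; split=> //; rewrite Lx; split=> //.
by apply: fc_inj; rewrite phix shift0.
Qed.

Lemma fc_vfollower v : vfollower v = phi v.
Proof.
have [x [Ex [xv phix]]] := fc_vertex_path v.
apply/predeqP => w; rewrite phix FfollowerE; split.
  move=> [p [Rp [pv ->]]]; rewrite -lab_concat; apply: fc_label_image.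
  by exists (concat x p); split=> //; apply: edge_shift_concat; rewrite // Ex addNr xv pv.
move=> /fc_path[x' [Ex' [Lx' phix']]].
exists (fun n => x' n%:Z); split; first exact: edge_shift_right.
split; first by apply: fc_inj; rewrite (phix' 0) shift0 Ffollower_concat phix.
by apply: funext => n; have /= <- := congr1 (fun u => u n%:Z) Lx'.
Qed.

Lemma fc_presents : presents K Y.
Proof.
split=> [v | y]; last first.
  split; last exact: fc_label_image.
  by move=> /fc_path[x [Ex [Lx _]]]; exists x.
have [x [Ex [xv _]]] := fc_vertex_path v.
by split; [exists (x 0) | exists (x (-1)); rewrite Ex addNr].
Qed.

Lemma fc_regular : regular K Y.
Proof.
move=> v; have [x [Ex [xv phix]]] := fc_vertex_path v.
by exists x; split=> //; rewrite Ex addNr fc_vfollower.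
Qed.

Lemma fc_follower_separated : follower_separated K.
Proof. by move=> u v; rewrite !fc_vfollower; apply: fc_inj. Qed.

Lemma fc_card N : has_card (follower_sets Y) N -> #|lV K| = N.
Proof.
case: KY => _ [fsP _] HN; apply/eqP.
have fs_phi v : follower_sets Y (phi v) by apply/fsP; exists v.
by rewrite eqn_leq (has_card_le HN fc_inj fs_phi) (has_card_ge HN (fun X => proj1 (fsP X))).
Qed.

End FutureCover.

Section FutureCoverUnique.
Variables (A : finType) (Y : (int -> A) -> Prop).
Variables (K1 K2 : lgraph A) (phi1 : lV K1 -> (nat -> A) -> Prop)
  (phi2 : lV K2 -> (nat -> A) -> Prop).
Hypotheses (K1Y : is_future_cover Y K1 phi1) (K2Y : is_future_cover Y K2 phi2).

Lemma fc_hom : exists (fV : lV K1 -> lV K2) (fE : lE K1 -> lE K2),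
  (forall v, phi2 (fV v) = phi1 v) /\
  forall e, src (fE e) = fV (src e) /\ tgt (fE e) = fV (tgt e) /\ lab (fE e) = lab e.
Proof.
have /choice[fV fVE] : forall v, exists v', phi2 v' = phi1 v.
  by move: K1Y K2Y => [_ [fs1 _]] [_ [fs2 _]] v; apply/fs2/fs1; exists v.
have /choice[fE fEE] : forall e, exists e',
    src e' = fV (src e) /\ tgt e' = fV (tgt e) /\ lab e' = lab e.
  move=> e; have /(fc_edge_unique K2Y)[e' [? _]] :
    phi2 (fV (tgt e)) = derive (lab e) (phi2 (fV (src e))).
    by rewrite !fVE (fc_edge K1Y).
  by exists e'.
by exists fV, fE.
Qed.

End FutureCoverUnique.

Lemma fc_iso (A : finType) (Y : (int -> A) -> Prop) (K1 K2 : lgraph A) phi1 phi2 :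
  is_future_cover Y K1 phi1 -> is_future_cover Y K2 phi2 -> lgraph_iso K1 K2.
Proof.
move=> K1Y K2Y.
have [fV [fE [fVE fEE]]] := fc_hom K1Y K2Y; have [gV [gE [gVE gEE]]] := fc_hom K2Y K1Y.
have fgV : cancel gV fV by move=> v; apply: (fc_inj K2Y); rewrite fVE gVE.
have gfV : cancel fV gV by move=> v; apply: (fc_inj K1Y); rewrite gVE fVE.
exists fV, fE; split; first by exists gV.
split; last exact: fEE.
exists gE => e.
  have [fs [_ fl]] := fEE e; have [gs [_ gl]] := gEE (fE e).
  by apply: (fc_right_resolving K1Y); rewrite ?gs ?fs ?gfV ?gl ?fl.
have [gs [_ gl]] := gEE e; have [fs [_ fl]] := fEE (gE e).
by apply: (fc_right_resolving K2Y); rewrite ?fs ?gs ?fgV ?fl ?gl.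
Qed.

Section FutureCoverExists.
Variables (A : finType) (N : nat) (f : 'I_N -> (nat -> A) -> Prop).

Definition enum_future_edge := {t : 'I_N * A * 'I_N | `[< f t.2 = derive t.1.2 (f t.1.1) >]}.

Definition enum_future_cover : lgraph A :=
  @LGraph A 'I_N enum_future_edge (fun e => (val e).1.1) (fun e => (val e).2)
    (fun e => (val e).1.2).

Lemma enum_future_coverP (Y : (int -> A) -> Prop) :
  injective f -> (forall X, follower_sets Y X <-> exists i, f i = X) ->
  is_future_cover Y enum_future_cover f.
Proof.
move=> finj fsf; split=> //; split=> // u v a; split=> [fv | nfv].
  have uav : `[< f (u, a, v).2 = derive (u, a, v).1.2 (f (u, a, v).1.1) >] by apply/asboolP.
  exists (exist _ (u, a, v) uav); split=> // e [eu [ev ea]]; apply: val_inj.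
  by move: e eu ev ea => [[[u' a'] v'] _] /= -> -> ->.
by move=> [[[u' a'] v'] /= /asboolP fv'] [eu [ev ea]]; apply: nfv; rewrite -eu -ev -ea.
Qed.

End FutureCoverExists.

Theorem corollary3p3 (A : finType) (Y : (int -> A) -> Prop) (HY : sofic Y) :
  exists N : nat,
    has_card (follower_sets Y) N /\
    (forall G : lgraph A,
       presents G Y -> right_resolving G -> regular G Y -> follower_separated G ->
       (#|lV G| <= N)%N) /\
    (exists (K : lgraph A) (phi : lV K -> (nat -> A) -> Prop),
       is_future_cover Y K phi) /\
    (forall (K : lgraph A) (phi : lV K -> (nat -> A) -> Prop),
       is_future_cover Y K phi ->
       presents K Y /\ right_resolving K /\ regular K Y /\ follower_separated K /\
       #|lV K| = N /\
       (forall G : lgraph A,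
          presents G Y -> right_resolving G -> regular G Y -> follower_separated G ->
          #|lV G| = N -> lgraph_iso G K)).
Proof.
have [G0 G0Y] := HY.
have Yshift := presents_shift_invariant G0Y.
have Yclosed := presents_shift_closed G0Y.
have [N HN] := follower_sets_finite G0Y.
exists N; split=> //; split.
  by move=> G GY _ Greg Gsep; exact: (regular_presentation_card_le GY Greg Gsep HN).
split.
  have [f [finj fsf]] := HN.
  by exists (enum_future_cover f), f; exact: (enum_future_coverP finj fsf).
move=> K phi KY; split; first exact: (fc_presents Yshift Yclosed KY).
split; first exact: (fc_right_resolving KY).
split; first exact: (fc_regular Yshift Yclosed KY).
split; first exact: (fc_follower_separated Yshift Yclosed KY).
split; first exact: (fc_card KY HN).
move=> G GY Grr Greg Gsep cardG.
exact: (fc_iso (regular_presentation_future_cover GY Grr Greg Gsep HN cardG) KY).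
Qed.
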